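(* Let $K$ and $K'$ be two non-degenerate CMIs, with $\mathrm{can}(\mathrm{pur}(K))=(C,\langle\mathbb I_K,\mathbb I_K,P_i,1\le i\le t\rangle)$ and $\mathrm{can}(\mathrm{pur}(K'))=(C',\langle\mathbb I_{K'},\mathbb I_{K'},P'_j,1\le j\le s\rangle)$. (1) If $R_K^{K'}=(\cdot,\langle\ \rangle)$, then $K$ implies $K'$ if and only if $C\subseteq C'$. (2) If $R_K^{K'}\ne(\cdot,\langle\ \rangle)$, then $K$ implies $K'$ if and only if $K$ implies $R_K^{K'}$.
   Context: Setting: $X_1,\dots,X_n$ jointly distributed discrete random variables with $H(X_i)<\infty$; distribution unspecified. $X_\alpha=(X_i,i\in\alpha)$, $X_\emptyset$ constant. A CMI is $K=(C,\langle Q_1,\dots,Q_k\rangle)$, $k\ge0$, $C\subseteq\{1,\dots,n\}$, $\langle\cdot\rangle$ an unordered multiset of subsets; valid (for a given distribution) if $\sum_iH(X_{Q_i}|X_C)-H(X_{Q_1},\dots,X_{Q_k}|X_C)=0$. Empty members may be deleted. Degenerate = valid for every distribution, written $(\cdot,\langle\ \rangle)$. ''$K$ implies $K'$'': for every joint distribution, if $K$ is valid then $K'$ is valid. $\mathrm{pur}(K)=(C,\langle Q_i\setminus C:Q_i\setminus C\ne\emptyset\rangle)$. For pure $K$: $\mathbb I_K$ = indices lying in at least two members of the collection if $k\ge2$, else $\emptyset$; $P_1,\dots,P_t$ the nonempty sets among $Q_i\setminus\mathbb I_K$; $\mathrm{can}(K)=(\cdot,\langle\ \rangle)$ if $k\le1$,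 $(C,\langle\mathbb I_K,\mathbb I_K\rangle)$ if $k\ge2,\mathbb I_K\ne\emptyset,t\le1$, $(C,\langle P_1..P_t\rangle)$ if $k\ge2,\mathbb I_K=\emptyset$, $(C,\langle\mathbb I_K,\mathbb I_K,P_1..P_t\rangle)$ if $k\ge2,\mathbb I_K\ne\emptyset,t\ge2$. For general $K$, $\mathbb I_K$ is the repeated-index set of $\mathrm{pur}(K)$; general-form notation omits copies of $\mathbb I_K$ when empty and uses $t=0$ for $(C,\langle\mathbb I_K,\mathbb I_K\rangle)$. $R_K^{K'}$: with $D=\mathbb I_{K'}\setminus\mathbb I_K$ and $T_1,\dots,T_u$ the nonempty sets among $P'_j\setminus\mathbb I_K$: $R_K^{K'}=(\cdot,\langle\ \rangle)$ if $D=\emptyset,u\le1$; $(C'\setminus\mathbb I_K,\langle T_1..T_u\rangle)$ if $D=\emptyset,u\ge2$; $(C'\setminus\mathbb I_K,\langle D,D\rangle)$ if $D\ne\emptyset,u\le1$; $(C'\setminus\mathbb I_K,\langle D,D,T_1..T_u\rangle)$ if $D\ne\emptyset,u\ge2$. *)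

From Stdlib Require Import Reals.
From Coquelicot Require Import Coquelicot.
From mathcomp Require Import all_boot.

Set Implicit Arguments.
Unset Strict Implicit.
Unset Printing Implicit Defensive.
Local Open Scope nat_scope.

(* A joint distribution is given by a countable (discrete) probability
   space on nat with pmf q, and random variables X i : nat -> nat
   (every countable alphabet embeds in nat).                            *)

Definition is_pmf (q : nat -> R) : Prop :=
  (forall w, Rle R0 (q w)) /\ is_series q R1.

Section Entropy.
Variable n : nat.
Variable q : nat -> R.
Variable X : 'I_n -> nat -> nat.

Definition sameval (A : {set 'I_n}) (w w' : nat) : bool :=
  [forall i in A, X i w == X i w'].

Definition marg (A : {set 'I_n}) (w : nat) : R :=
  Series (fun w' => if sameval A w w' then q w' else R0).

Definition ent_term (A : {set 'I_n}) (w : nat) : R :=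
  Rmult (q w) (Ropp (ln (marg A w))).

Definition entropy (A : {set 'I_n}) : R := Series (ent_term A).

Definition centropy (A C : {set 'I_n}) : R :=
  Rminus (entropy (A :|: C)) (entropy C).

Definition finite_entropies : Prop :=
  forall i : 'I_n, ex_series (ent_term [set i]).

End Entropy.

Definition admissible (n : nat) (q : nat -> R) (X : 'I_n -> nat -> nat) : Prop :=
  is_pmf q /\ finite_entropies q X.

(* CMIs: K = (C, <Q_1,...,Q_k>); the multiset is represented by a seq. *)

Record cmi (n : nat) := mkCMI { cmi_C : {set 'I_n}; cmi_Qs : seq {set 'I_n} }.

Definition cmi_deg (n : nat) : cmi n := mkCMI set0 [::].

Definition valid (n : nat) (q : nat -> R) (X : 'I_n -> nat -> nat) (K : cmi n) : Prop :=
  Rminus (foldr (fun Q acc => Rplus (centropy q X Q (cmi_C K)) acc) R0 (cmi_Qs K))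
         (centropy q X (\bigcup_(Q <- cmi_Qs K) Q) (cmi_C K)) = R0.

Definition degenerate (n : nat) (K : cmi n) : Prop :=
  forall (q : nat -> R) (X : 'I_n -> nat -> nat), admissible q X -> valid q X K.

Definition cmi_implies (n : nat) (K K' : cmi n) : Prop :=
  forall (q : nat -> R) (X : 'I_n -> nat -> nat),
    admissible q X -> valid q X K -> valid q X K'.

Definition pur (n : nat) (K : cmi n) : cmi n :=
  mkCMI (cmi_C K) [seq Q :\: cmi_C K | Q <- cmi_Qs K & Q :\: cmi_C K != set0].

Definition Ipure (n : nat) (K : cmi n) : {set 'I_n} :=
  if 2 <= size (cmi_Qs K)
  then [set i | 2 <= count (fun Q : {set 'I_n} => i \in Q) (cmi_Qs K)]
  else set0.

Definition Ppure (n : nat) (K : cmi n) : seq {set 'I_n} :=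
  [seq Q :\: Ipure K | Q <- cmi_Qs K & Q :\: Ipure K != set0].

Definition can (n : nat) (K : cmi n) : cmi n :=
  let I := Ipure K in
  let P := Ppure K in
  if size (cmi_Qs K) <= 1 then cmi_deg n
  else if I == set0 then mkCMI (cmi_C K) P
  else if size P <= 1 then mkCMI (cmi_C K) [:: I; I]
  else mkCMI (cmi_C K) [:: I, I & P].

Definition IK (n : nat) (K : cmi n) : {set 'I_n} := Ipure (pur K).

(* the P_j of can(pur(K)) in general-form notation (t = 0 when
   can(pur K) = (C, <I_K, I_K>)) *)
Definition genP (n : nat) (K : cmi n) : seq {set 'I_n} :=
  let K0 := pur K in
  if size (cmi_Qs K0) <= 1 then [::]
  else if (IK K != set0) && (size (Ppure K0) <= 1) then [::]
  else Ppure K0.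

Definition Rcmi (n : nat) (K K' : cmi n) : cmi n :=
  let I := IK K in
  let D := IK K' :\: I in
  let T := [seq P :\: I | P <- genP K' & P :\: I != set0] in
  let C'' := cmi_C K' :\: I in
  if D == set0 then
    (if size T <= 1 then cmi_deg n else mkCMI C'' T)
  else
    (if size T <= 1 then mkCMI C'' [:: D; D] else mkCMI C'' [:: D, D & T]).

From Stdlib Require Import Reals Lra.
From Coquelicot Require Import Coquelicot.
From mathcomp Require Import all_boot.
Set Implicit Arguments.
Unset Strict Implicit.
Unset Printing Implicit Defensive.
Local Open Scope R_scope.

(* The entropy function A |-> H(X_A) is monotone and submodular (Gibbs'
   inequality, proved here for countable alphabets), hence so is
   A |-> H(X_A | X_C).  For such a function g the defect
   sum_i g(Q_i) - g(U_i Q_i) dominates g(I), where I is the set of indices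
   lying in two or more Q_i.  So if K is valid then H(X_{I_K} | X_C) = 0, and
   X_{I_K} can be added to or removed from any conditioning set containing C;
   when C is contained in C' this turns the validity of K' into that of
   R_K^{K'}.  When C is not contained in C', a fair coin copied into every X_j
   with j outside C' (the X_j with j in C' being constant) makes K valid but
   K' and R_K^{K'} invalid, since each of them has two members not contained
   in its conditioning set. *)

(** * Nonnegative series and probabilities of events *)

Lemma Rinv_ge0 x : 0 <= x -> 0 <= / x.
Proof. by move=> [x_gt0|<-]; [left; exact: Rinv_pos | rewrite Rinv_0; lra]. Qed.

Lemma sum_n_ge0 (a : nat -> R) N : (forall k, 0 <= a k) -> 0 <= sum_n a N.
Proof.
move=> a_ge0; elim: N => [|N IH]; first by rewrite sum_O.
by rewrite sum_Sn /plus /=; have := a_ge0 N.+1; lra.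
Qed.

Lemma term_le_sum_n (a : nat -> R) N : (forall k, 0 <= a k) -> a N <= sum_n a N.
Proof.
move=> a_ge0; case: N => [|N]; first by rewrite sum_O; lra.
by rewrite sum_Sn /plus /=; have := sum_n_ge0 N a_ge0; lra.
Qed.

Lemma sum_n_le_Series (a : nat -> R) N :
  (forall k, 0 <= a k) -> ex_series a -> sum_n a N <= Series a.
Proof.
move=> a_ge0 [l al]; rewrite (is_series_unique _ _ al).
apply: growing_ineq; last exact/is_lim_seq_Reals.
by move=> k; rewrite sum_Sn /plus /=; have := a_ge0 k.+1; lra.
Qed.

Lemma ex_series_bounded_ge0 (a : nat -> R) M :
  (forall k, 0 <= a k) -> (forall N, sum_n a N <= M) ->
  ex_series a /\ Series a <= M.
Proof.
move=> a_ge0 aM.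
have [l al] : ex_finite_lim_seq (sum_n a).
  apply: (ex_finite_lim_seq_incr _ M) => // k.
  by rewrite sum_Sn /plus /=; have := a_ge0 k.+1; lra.
split; first by exists l.
rewrite (is_series_unique a l al).
exact: (is_lim_seq_le _ _ _ _ aM al (is_lim_seq_const M)).
Qed.

Lemma ex_series_le_ge0 (a b : nat -> R) :
  (forall k, 0 <= a k <= b k) -> ex_series b -> ex_series a.
Proof.
move=> ab; apply: ex_series_le => k.
by rewrite /norm /= /abs /= Rabs_pos_eq; have := ab k; lra.
Qed.

Lemma is_series_finite_support (a : nat -> R) N :
  (forall k, (N < k)%N -> a k = 0) -> is_series a (sum_n a N).
Proof.
move=> a_out.
have stable k : sum_n a (k + N) = sum_n a N.
  elim: k => [|k IH] //; rewrite addSn sum_Sn IH a_out ?ltnS ?leq_addl //.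
  by rewrite /plus /=; lra.
suff : is_lim_seq (sum_n a) (sum_n a N) by [].
apply: (is_lim_seq_ext_loc (fun _ => sum_n a N)); last exact: is_lim_seq_const.
by exists N => k /leP Nk; rewrite -(subnK Nk) stable.
Qed.

Lemma is_series_support2 (a : nat -> R) :
  (forall k, (1 < k)%N -> a k = 0) -> is_series a (a 0%N + a 1%N).
Proof. by move=> a_out; have := is_series_finite_support a_out; rewrite sum_Sn sum_O. Qed.

Lemma Series_support2 (a : nat -> R) :
  (forall k, (1 < k)%N -> a k = 0) -> Series a = a 0%N + a 1%N.
Proof. by move=> a_out; apply/is_series_unique/is_series_support2. Qed.

Lemma Series_sum_n (F : nat -> nat -> R) N :
  (forall w, ex_series (F w)) ->
  ex_series (fun u => sum_n (fun w => F w u) N) /\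
  sum_n (fun w => Series (F w)) N = Series (fun u => sum_n (fun w => F w u) N).
Proof.
move=> exF; elim: N => [|N [exN IH]].
  split; first by apply: ex_series_ext (exF 0%N) => u; rewrite sum_O.
  by rewrite sum_O; apply: Series_ext => u; rewrite sum_O.
have sumS u : sum_n (fun w => F w u) N.+1 = sum_n (fun w => F w u) N + F N.+1 u.
  by rewrite sum_Sn.
split; first by apply: ex_series_ext (ex_series_plus _ _ exN (exF N.+1)) => u; rewrite sumS.
by rewrite sum_Sn IH /plus /= -Series_plus //; apply: Series_ext => u; rewrite sumS.
Qed.

Definition prob (q : nat -> R) (E : nat -> bool) : R :=
  Series (fun w => if E w then q w else 0).

Section Probability.
Variable q : nat -> R.
Hypothesis q_pmf : is_pmf q.

Lemma pmf_ge0 w : 0 <= q w.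
Proof. by case: q_pmf. Qed.

Lemma pmf_Series : Series q = 1.
Proof. by case: q_pmf => _ /is_series_unique. Qed.

Lemma restrict_ge0 (b : bool) w : 0 <= (if b then q w else 0).
Proof. by case: b; [exact: pmf_ge0 | lra]. Qed.

Lemma restrict_le (b : bool) w : (if b then q w else 0) <= q w.
Proof. by case: b; have := pmf_ge0 w; lra. Qed.

Lemma ex_series_restrict (E : nat -> bool) :
  ex_series (fun w => if E w then q w else 0).
Proof.
apply: (ex_series_le_ge0 (b := q)); last by case: q_pmf => _ ?; exists 1.
by move=> w; split; [exact: restrict_ge0 | exact: restrict_le].
Qed.

Lemma sum_n_le_prob (E : nat -> bool) N :
  sum_n (fun w => if E w then q w else 0) N <= prob q E.
Proof. exact: sum_n_le_Series (fun w => restrict_ge0 (E w) w) (ex_series_restrict E). Qed.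

Lemma prob_ge0 E : 0 <= prob q E.
Proof. by apply: Rle_trans (sum_n_le_prob E 0); rewrite sum_O; exact: restrict_ge0. Qed.

Lemma prob_sub (E F : nat -> bool) : (forall w, E w -> F w) -> prob q E <= prob q F.
Proof.
move=> EF; apply: Series_le; last exact: ex_series_restrict.
move=> w; split; first exact: restrict_ge0.
case Ew: (E w); last exact: restrict_ge0.
by rewrite EF //; lra.
Qed.

Lemma prob_predT (E : nat -> bool) : (forall w, E w) -> prob q E = 1.
Proof. by move=> ET; rewrite -pmf_Series; apply: Series_ext => w; rewrite ET. Qed.

Lemma prob_le1 E : prob q E <= 1.
Proof. by rewrite -(prob_predT (E := predT)) //; exact: prob_sub. Qed.

Lemma prob_ge_point (E : nat -> bool) w : E w -> q w <= prob q E.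
Proof.
move=> Ew; apply: Rle_trans (sum_n_le_prob E w).
by have := term_le_sum_n w (fun w => restrict_ge0 (E w) w); rewrite Ew.
Qed.

Lemma sum_n_restrict_div_prob (E : nat -> bool) (f : nat -> R) N :
  (forall w, E w -> f w = prob q E) ->
  sum_n (fun w => (if E w then q w else 0) / f w) N <= 1.
Proof.
move=> fE.
have -> : sum_n (fun w => (if E w then q w else 0) / f w) N =
          / prob q E * sum_n (fun w => if E w then q w else 0) N.
  rewrite -[_ * _](sum_n_mult_l (K := R_Ring)); apply: sum_n_ext => w; rewrite /mult /=.
  by case Ew: (E w); [rewrite fE // | ]; rewrite /Rdiv; ring.
have le_prob := sum_n_le_prob E N.
have [pos|<-] := Rle_lt_or_eq_dec _ _ (prob_ge0 E); last by rewrite Rinv_0; lra.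
apply: Rle_trans (_ : / prob q E * prob q E <= 1); last by rewrite Rinv_l; lra.
by apply: Rmult_le_compat_l => //; left; exact: Rinv_pos.
Qed.

End Probability.

(** * The entropy of a discrete joint distribution is a polymatroid *)

Section SameValue.
Variables (n : nat) (X : 'I_n -> nat -> nat).
Implicit Types A B S : {set 'I_n}.
Local Notation sv := (sameval X).

Lemma sameval_refl S w : sv S w w.
Proof. exact/forall_inP. Qed.

Lemma sameval_sym S w w' : sv S w w' = sv S w' w.
Proof. by apply/forall_inP/forall_inP => eqX i /eqX /eqP ->. Qed.

Lemma sameval_trans S w1 w2 w3 : sv S w1 w2 -> sv S w2 w3 -> sv S w1 w3.
Proof.
move=> /forall_inP eq12 /forall_inP eq23; apply/forall_inP => i Si.
by rewrite (eqP (eq12 i Si)) (eqP (eq23 i Si)).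
Qed.

Lemma sameval_class S w v z : sv S w v -> sv S w z = sv S v z.
Proof.
move=> wv; apply/idP/idP; last exact: sameval_trans.
by apply: sameval_trans; rewrite sameval_sym.
Qed.

Lemma sameval_setU A B w w' : sv (A :|: B) w w' = sv A w w' && sv B w w'.
Proof.
apply/forall_inP/andP => [eqAB | [/forall_inP eqA /forall_inP eqB] i].
  by split; apply/forall_inP => i Si; apply: eqAB; rewrite inE Si ?orbT.
by rewrite inE => /orP [] Si; [exact: eqA | exact: eqB].
Qed.

Lemma sameval_sub A B w w' : A \subset B -> sv B w w' -> sv A w w'.
Proof.
by move=> /subsetP AB /forall_inP eqB; apply/forall_inP => i /AB /eqB.
Qed.

End SameValue.

Section Marginals.
Variables (n : nat) (q : nat -> R) (X : 'I_n -> nat -> nat).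
Hypothesis q_pmf : is_pmf q.
Implicit Types A B S : {set 'I_n}.
Local Notation sv := (sameval X).
Local Notation m := (marg q X).
Local Notation ent := (ent_term q X).

Lemma marg_ge0 S w : 0 <= m S w.
Proof. exact: prob_ge0. Qed.

Lemma marg_le1 S w : m S w <= 1.
Proof. exact: prob_le1. Qed.

Lemma marg_gt0 S w : 0 < q w -> 0 < m S w.
Proof. by move=> qw; apply: Rlt_le_trans (prob_ge_point q_pmf (sameval_refl X S w)). Qed.

Lemma marg_class S w v : sv S w v -> m S w = m S v.
Proof. by move=> wv; apply: Series_ext => z; rewrite (sameval_class z wv). Qed.

Lemma marg_refine (A B : {set 'I_n}) w :
  (forall w', sv B w w' -> sv A w w') -> m B w <= m A w.
Proof. exact: prob_sub. Qed.

Lemma ent_term_ge0 S w : 0 <= ent S w.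
Proof.
rewrite /ent_term; have [qw|<-] := Rle_lt_or_eq_dec _ _ (pmf_ge0 q_pmf w); last lra.
apply: Rmult_le_pos; first lra.
by have := ln_le _ _ (marg_gt0 S qw) (marg_le1 S w); rewrite ln_1; lra.
Qed.

Lemma ent_term_refine (A B : {set 'I_n}) w :
  (forall w', sv B w w' -> sv A w w') -> ent A w <= ent B w.
Proof.
move=> BA; rewrite /ent_term.
have [qw|<-] := Rle_lt_or_eq_dec _ _ (pmf_ge0 q_pmf w); last lra.
apply: Rmult_le_compat_l; first lra.
by have := ln_le _ _ (marg_gt0 B qw) (marg_refine BA); lra.
Qed.

End Marginals.

Section Gibbs.
Variables (n : nat) (q : nat -> R) (X : 'I_n -> nat -> nat).
Hypothesis q_pmf : is_pmf q.
Local Notation sv := (sameval X).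
Local Notation m := (marg q X).
Local Notation ent := (ent_term q X).

Variables P1 P2 P12 P0 : {set 'I_n}.
Hypothesis sv_P12 : forall w w', sv P12 w w' = sv P1 w w' && sv P2 w w'.
Hypothesis sv_P1 : forall w w', sv P1 w w' -> sv P0 w w'.
Hypothesis sv_P2 : forall w w', sv P2 w w' -> sv P0 w w'.

(* Grouping outcomes by their P0-class shows that [gibbs] sums to at most 1;
   with ln r <= r - 1 this yields H(P12) + H(P0) <= H(P1) + H(P2). *)
Let gibbs w := q w * m P1 w * m P2 w / (m P12 w * m P0 w).

Lemma marg_meet_class u v w :
  sv P1 w u -> sv P2 w v -> m P12 w = prob q (fun z => sv P1 z u && sv P2 z v).
Proof.
move=> wu wv; apply: Series_ext => z.
by rewrite sv_P12 (sameval_class z wu) (sameval_class z wv) !(sameval_sym _ _ z).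
Qed.

Lemma sum_n_marg_ratio_le v N :
  sum_n (fun w => (if sv P2 w v then q w else 0) * m P1 w / m P12 w) N <= m P0 v.
Proof.
pose F w u := (if sv P2 w v then q w else 0) / m P12 w * (if sv P1 w u then q u else 0).
have F_ge0 w u : 0 <= F w u.
  apply: Rmult_le_pos; last exact: restrict_ge0.
  by apply: Rmult_le_pos; [exact: restrict_ge0 | apply: Rinv_ge0; exact: marg_ge0].
have exF w : ex_series (F w) := ex_series_scal_l _ _ (ex_series_restrict q_pmf _).
have -> : sum_n (fun w => (if sv P2 w v then q w else 0) * m P1 w / m P12 w) N =
          sum_n (fun w => Series (F w)) N.
  apply: sum_n_ext => w /=; rewrite /F Series_scal_l.
  by change (Series _) with (m P1 w); rewrite /Rdiv; ring.
have [_ ->] := Series_sum_n N exF.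
apply: Series_le (ex_series_restrict q_pmf _) => u; split; first exact: sum_n_ge0.
have -> : sum_n (fun w => F w u) N =
          q u * sum_n (fun w => (if sv P1 w u && sv P2 w v then q w else 0) / m P12 w) N.
  rewrite -[q u * _](sum_n_mult_l (K := R_Ring)); apply: sum_n_ext => w.
  by rewrite /F /mult /=; case: (sv P1 w u); case: (sv P2 w v); rewrite /Rdiv /=; ring.
case P0vu: (sv P0 v u).
  suff : sum_n (fun w => (if sv P1 w u && sv P2 w v then q w else 0) / m P12 w) N <= 1.
    by have := pmf_ge0 q_pmf u; nra.
  apply: sum_n_restrict_div_prob => // w /andP [wu wv]; exact: marg_meet_class.
rewrite (sum_n_ext _ (fun _ => 0)) ?sum_n_const; first by rewrite Rmult_0_r Rmult_0_r; lra.
move=> w; case: (boolP (sv P1 w u && sv P2 w v)) => [/andP [wu wv]|_]; last first.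
  by rewrite /Rdiv; lra.
have : sv P0 v u by apply: sameval_trans (sv_P1 wu); rewrite sameval_sym; exact: sv_P2.
by rewrite P0vu.
Qed.

Lemma sum_n_gibbs_le1 N : sum_n gibbs N <= 1.
Proof.
pose F w v := q w * m P1 w / (m P12 w * m P0 w) * (if sv P2 w v then q v else 0).
have F_ge0 w v : 0 <= F w v.
  apply: Rmult_le_pos; last exact: restrict_ge0.
  apply: Rmult_le_pos; first by apply: Rmult_le_pos; [exact: pmf_ge0 | exact: marg_ge0].
  by apply: Rinv_ge0; apply: Rmult_le_pos; exact: marg_ge0.
have exF w : ex_series (F w) := ex_series_scal_l _ _ (ex_series_restrict q_pmf _).
have -> : sum_n gibbs N = sum_n (fun w => Series (F w)) N.
  apply: sum_n_ext => w /=; rewrite /F Series_scal_l.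
  by change (Series _) with (m P2 w); rewrite /gibbs /Rdiv; ring.
have [_ ->] := Series_sum_n N exF.
rewrite -(pmf_Series q_pmf); apply: Series_le; last by case: q_pmf => _ ?; exists 1.
move=> v; split; first exact: sum_n_ge0.
have -> : sum_n (fun w => F w v) N =
    q v / m P0 v * sum_n (fun w => (if sv P2 w v then q w else 0) * m P1 w / m P12 w) N.
  rewrite -[_ / _ * _](sum_n_mult_l (K := R_Ring)); apply: sum_n_ext => w.
  rewrite /F /mult /=; case P2wv: (sv P2 w v); last by rewrite /Rdiv; ring.
  by rewrite (marg_class q (sv_P2 P2wv)) /Rdiv Rinv_mult; ring.
have [qv|<-] := Rle_lt_or_eq_dec _ _ (pmf_ge0 q_pmf v); last by rewrite /Rdiv; lra.
have m0v := marg_gt0 X q_pmf P0 qv.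
apply: Rle_trans (_ : q v / m P0 v * m P0 v <= q v); last by field_simplify; lra.
apply: Rmult_le_compat_l; first by apply: Rle_mult_inv_pos; lra.
exact: sum_n_marg_ratio_le.
Qed.

Lemma ent_term_gibbs w : ent P12 w + ent P0 w <= ent P1 w + ent P2 w + (gibbs w - q w).
Proof.
rewrite /ent_term /gibbs; have [qw|<-] := Rle_lt_or_eq_dec _ _ (pmf_ge0 q_pmf w); last first.
  by rewrite /Rdiv; lra.
have m1 := marg_gt0 X q_pmf P1 qw; have m2 := marg_gt0 X q_pmf P2 qw.
have m12 := marg_gt0 X q_pmf P12 qw; have m0 := marg_gt0 X q_pmf P0 qw.
set r := m P1 w * m P2 w / (m P12 w * m P0 w).
have m1_m2 := Rmult_lt_0_compat _ _ m1 m2; have m12_m0 := Rmult_lt_0_compat _ _ m12 m0.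
have r_gt0 : 0 < r by exact: Rlt_mult_inv_pos.
have ln_r : ln r = ln (m P1 w) + ln (m P2 w) - ln (m P12 w) - ln (m P0 w).
  rewrite /r /Rdiv ln_mult ?ln_Rinv ?ln_mult //; first lra.
  exact: Rinv_pos.
have ln_le_sub1 : ln r <= r - 1 by have := exp_ineq1_le (ln r); rewrite exp_ln //; lra.
have -> : q w * m P1 w * m P2 w / (m P12 w * m P0 w) = q w * r by rewrite /r /Rdiv; ring.
nra.
Qed.

Lemma entropy_gibbs_submod :
  ex_series (ent P1) -> ex_series (ent P2) ->
  [/\ ex_series (ent P12), ex_series (ent P0) &
      entropy q X P12 + entropy q X P0 <= entropy q X P1 + entropy q X P2].
Proof.
move=> ex1 ex2.
have gibbs_ge0 w : 0 <= gibbs w.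
  have m1 := marg_ge0 X q_pmf P1 w; have m2 := marg_ge0 X q_pmf P2 w.
  have m12 := marg_ge0 X q_pmf P12 w; have m0 := marg_ge0 X q_pmf P0 w.
  apply: Rmult_le_pos; last by apply: Rinv_ge0; apply: Rmult_le_pos.
  by apply: Rmult_le_pos => //; apply: Rmult_le_pos => //; exact: pmf_ge0.
have [ex_gibbs sum_gibbs] := ex_series_bounded_ge0 gibbs_ge0 sum_n_gibbs_le1.
have ex_q : ex_series q by case: q_pmf => _ ?; exists 1.
have ex_bound : ex_series (fun w => ent P1 w + ent P2 w + (gibbs w - q w)).
  by apply: ex_series_plus; [exact: ex_series_plus | exact: ex_series_minus].
have ex12 : ex_series (ent P12).
  apply: ex_series_le_ge0 (ex_bound) => w; split; first exact: ent_term_ge0.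
  by have := ent_term_gibbs w; have := ent_term_ge0 X q_pmf P0 w; lra.
have ex0 : ex_series (ent P0).
  apply: ex_series_le_ge0 ex1 => w; split; first exact: ent_term_ge0.
  by apply: ent_term_refine => // w'; exact: sv_P1.
have sum_bound : Series (fun w => ent P1 w + ent P2 w + (gibbs w - q w)) =
                 Series (ent P1) + Series (ent P2) + (Series gibbs - 1).
  rewrite Series_plus; [|exact: ex_series_plus|exact: ex_series_minus].
  by rewrite Series_plus // Series_minus // (pmf_Series q_pmf).
split => //; rewrite /entropy -Series_plus //.
apply: Rle_trans (Series_le _ _ _ ex_bound) _; last by rewrite sum_bound; lra.
move=> w; split; last exact: ent_term_gibbs.
by have := ent_term_ge0 X q_pmf P12 w; have := ent_term_ge0 X q_pmf P0 w; lra.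
Qed.

End Gibbs.

Section EntropyPolymatroid.
Variables (n : nat) (q : nat -> R) (X : 'I_n -> nat -> nat).
Hypothesis q_pmf : is_pmf q.
Implicit Types A B C S : {set 'I_n}.
Local Notation ent := (ent_term q X).
Local Notation h := (entropy q X).

Lemma entropy_submod_cond A B C :
  ex_series (ent (A :|: C)) -> ex_series (ent (B :|: C)) ->
  [/\ ex_series (ent (A :|: B :|: C)), ex_series (ent C) &
      h (A :|: B :|: C) + h C <= h (A :|: C) + h (B :|: C)].
Proof.
apply: entropy_gibbs_submod => // w w'; rewrite !sameval_setU; try by case/andP.
by case: (sameval X A w w'); case: (sameval X B w w'); case: (sameval X C w w').
Qed.

Lemma ent_term_set0 w : ent set0 w = 0.
Proof.
rewrite /ent_term (_ : marg q X set0 w = 1) ?ln_1; first lra.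
by apply: prob_predT => // z; apply/forall_inP => i; rewrite inE.
Qed.

Hypothesis X_fin : finite_entropies q X.

Lemma ex_series_ent S : ex_series (ent S).
Proof.
move: {2}#|S| (leqnn #|S|) => k; elim: k S => [|k IH] S.
  rewrite leqn0 cards_eq0 => /eqP ->; exists (0 + 0).
  apply: (is_series_ext (fun _ => 0)) => [w|]; first by rewrite ent_term_set0.
  exact: (is_series_support2 (a := fun _ => 0)).
case: (set_0Vmem S) => [-> _|[i Si]]; first by apply: IH; rewrite cards0.
rewrite (cardsD1 i S) Si add1n ltnS => cardS.
have ex_i : ex_series (ent ([set i] :|: set0)) by rewrite setU0; exact: X_fin.
have ex_rest : ex_series (ent (S :\ i :|: set0)) by rewrite setU0; exact: IH.
have [exS _ _] := entropy_submod_cond ex_i ex_rest.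
by rewrite setU0 (setD1K Si) in exS.
Qed.

Lemma entropy_mono A B : A \subset B -> h A <= h B.
Proof.
move=> AB; apply: Series_le (ex_series_ent B) => w; split; first exact: ent_term_ge0.
by apply: ent_term_refine => // w'; exact: sameval_sub.
Qed.

Lemma entropy_submod A B : h (A :|: B) + h (A :&: B) <= h A + h B.
Proof.
have [_ _] := entropy_submod_cond (ex_series_ent (A :|: (A :&: B)))
                                  (ex_series_ent (B :|: (A :&: B))).
have absorb (D E : {set 'I_n}) : E \subset D -> D :|: E = D by move/setUidPl.
rewrite (absorb _ _ (subsetIl A B)) (absorb _ _ (subsetIr A B)).
by rewrite (absorb _ _ (subset_trans (subsetIl A B) (subsetUl A B))).
Qed.

End EntropyPolymatroid.

(** * Total correlation of a polymatroid *)

Section TotalCorrelation.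
Variable n : nat.
Implicit Types (A B S : {set 'I_n}) (s : seq {set 'I_n}) (g : {set 'I_n} -> R).

Definition sum_sets g s : R := foldr (fun Q acc => Rplus (g Q) acc) R0 s.

Definition total_corr g s : R := Rminus (sum_sets g s) (g (\bigcup_(Q <- s) Q)).

Definition repeated s : {set 'I_n} :=
  [set i | 2 <= count (fun Q : {set 'I_n} => i \in Q) s]%N.

Definition trim S s : seq {set 'I_n} := [seq Q :\: S | Q <- s & Q :\: S != set0].

Lemma in_bigcup_count i s :
  (i \in \bigcup_(Q <- s) Q) = (0 < count (fun Q : {set 'I_n} => i \in Q) s)%N.
Proof.
elim: s => [|A s IH]; first by rewrite big_nil inE.
by rewrite big_cons inE IH /=; case: (i \in A).
Qed.

Lemma repeated_cons A s : repeated (A :: s) = repeated s :|: (A :&: \bigcup_(Q <- s) Q).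
Proof.
apply/setP => i; rewrite !inE in_bigcup_count /=.
by case: (i \in A); rewrite ?andbF ?orbF //; case: (count _ s) => [|[|k]].
Qed.

Lemma bigcup_trim S s : \bigcup_(Q <- trim S s) Q = (\bigcup_(Q <- s) Q) :\: S.
Proof.
elim: s => [|A s IH]; first by rewrite !big_nil set0D.
rewrite /trim /=; case: ifP => [_|/negbFE/eqP AS] /=;
  rewrite !big_cons -/(trim S s) IH setDUl //.
by rewrite AS set0U.
Qed.

Lemma size_trim S s : size (trim S s) = count (fun Q : {set 'I_n} => ~~ (Q \subset S)) s.
Proof. by rewrite size_map size_filter; apply: eq_count => Q; rewrite setD_eq0. Qed.

Lemma size_trim_le S s : (size (trim S s) <= size s)%N.
Proof. by rewrite size_trim count_size. Qed.

Lemma mem_trim S s P : P \in trim S s -> exists2 Q, Q \in s & P = Q :\: S /\ P != set0.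
Proof. by case/mapP => Q; rewrite mem_filter => /andP [QS Qs] ->; exists Q. Qed.

Lemma eq_total_corr g g' s : g =1 g' -> total_corr g s = total_corr g' s.
Proof.
by move=> gg'; rewrite /total_corr gg'; congr Rminus; elim: s => //= A s ->; rewrite gg'.
Qed.

Section Normalized.
Variable g : {set 'I_n} -> R.
Hypothesis g0 : g set0 = 0.

Lemma total_corr_small s : (size s <= 1)%N -> total_corr g s = 0.
Proof.
case: s => [|A [|]] //= _; rewrite /total_corr /= ?big_nil ?big_cons ?big_nil ?setU0 ?g0; lra.
Qed.

Lemma total_corr_trim S s :
  (forall A, g A = g (A :\: S)) -> total_corr g s = total_corr g (trim S s).
Proof.
move=> gS; rewrite /total_corr bigcup_trim -gS; congr Rminus.
elim: s => [|A s IH] //=; rewrite /trim /=.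
case: ifP => [_|/negbFE/eqP AS] /=; rewrite -/(trim S s) -IH gS //.
by rewrite AS g0; lra.
Qed.

Hypothesis g_mono : forall A B, A \subset B -> g A <= g B.
Hypothesis g_submod : forall A B, g (A :|: B) + g (A :&: B) <= g A + g B.

Lemma set_fun_ge0 A : 0 <= g A.
Proof. by rewrite -g0; apply: g_mono; exact: sub0set. Qed.

Lemma bigcup_repeated_le s : g (\bigcup_(Q <- s) Q) + g (repeated s) <= sum_sets g s.
Proof.
elim: s => [|A s IH]; first by rewrite /= big_nil g0; lra.
rewrite big_cons repeated_cons /=.
set U := \bigcup_(Q <- s) Q in IH *.
have := g_submod A U; have := g_submod (repeated s) (A :&: U).
have := set_fun_ge0 (repeated s :&: (A :&: U)); lra.
Qed.

Lemma total_corr_ge0 s : 0 <= total_corr g s.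
Proof.
by have := bigcup_repeated_le s; have := set_fun_ge0 (repeated s); rewrite /total_corr; lra.
Qed.

Lemma null_setU S A : g S = 0 -> g (A :|: S) = g A.
Proof.
move=> gS; have := g_submod A S; have := set_fun_ge0 (A :&: S).
have := g_mono (subsetUl A S); lra.
Qed.

Lemma null_setD S A : g S = 0 -> g (A :\: S) = g A.
Proof.
move=> gS; apply: Rle_antisym; first exact/g_mono/subsetDl.
rewrite -(null_setU (A :\: S) gS); apply/g_mono/subsetP => i Ai.
by rewrite !inE Ai orbC; case: (i \in S).
Qed.

Lemma total_corr_eq0 s :
  total_corr g s = 0 <-> g (repeated s) = 0 /\ total_corr g (trim (repeated s) s) = 0.
Proof.
have trim_rep : g (repeated s) = 0 -> total_corr g s = total_corr g (trim (repeated s) s).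
  by move=> g_rep; apply: total_corr_trim => A; rewrite null_setD.
split=> [tc0 | [g_rep <-]]; last exact: trim_rep.
have g_rep : g (repeated s) = 0.
  have := bigcup_repeated_le s; have := set_fun_ge0 (repeated s).
  by rewrite /total_corr in tc0; lra.
by rewrite -trim_rep.
Qed.

Lemma total_corr_dup_eq0 J s :
  total_corr g [:: J, J & s] = 0 <-> g J = 0 /\ total_corr g s = 0.
Proof.
rewrite /total_corr /= !big_cons setUA setUid.
set U := \bigcup_(Q <- s) Q.
have := g_submod J U; have := set_fun_ge0 (J :&: U); have := total_corr_ge0 s.
rewrite /total_corr -/U; have := set_fun_ge0 J.
split=> [tc0 | [gJ tc0]]; last by rewrite setUC null_setU //; lra.
have gJ : g J = 0 by lra.
by split=> //; move: tc0; rewrite setUC null_setU //; lra.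
Qed.

End Normalized.
End TotalCorrelation.

(** * Conditioning on X_C and the reduction R_K^{K'} *)

Definition cond (n : nat) (h : {set 'I_n} -> R) (C A : {set 'I_n}) : R :=
  Rminus (h (A :|: C)) (h C).

Lemma valid_total_corr n q X (K : cmi n) :
  valid q X K <-> total_corr (cond (entropy q X) (cmi_C K)) (cmi_Qs K) = 0.
Proof. by []. Qed.

Section CMI.
Variable n : nat.
Implicit Types (A B C S Y : {set 'I_n}) (s : seq {set 'I_n}) (K : cmi n).

Lemma IK_repeated K :
  IK K = if (2 <= size (trim (cmi_C K) (cmi_Qs K)))%N
         then repeated (trim (cmi_C K) (cmi_Qs K)) else set0.
Proof. by []. Qed.

Lemma genP_trim K :
  genP K = if (size (trim (cmi_C K) (cmi_Qs K)) <= 1)%N then [::]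
           else if (IK K != set0) && (size (trim (IK K) (trim (cmi_C K) (cmi_Qs K))) <= 1)%N
           then [::] else trim (IK K) (trim (cmi_C K) (cmi_Qs K)).
Proof. by []. Qed.

Lemma IK_disjoint K i : i \in IK K -> i \notin cmi_C K.
Proof.
rewrite IK_repeated; case: ifP => _; last by rewrite inE.
rewrite inE => rep_i.
have /hasP [P /mem_trim [Q _ [-> _]]] :
    has (fun Q : {set 'I_n} => i \in Q) (trim (cmi_C K) (cmi_Qs K)).
  by rewrite has_count (leq_trans _ rep_i).
by rewrite inE => /andP [].
Qed.

Variable h : {set 'I_n} -> R.

Lemma cond_set0 C : cond h C set0 = 0.
Proof. by rewrite /cond set0U; lra. Qed.

Lemma total_corr_cond_trim C s : total_corr (cond h C) s = total_corr (cond h C) (trim C s).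
Proof.
apply: (total_corr_trim (cond_set0 C)) => A; rewrite /cond; congr (Rminus (h _) _).
by apply/setP => i; rewrite !inE; case: (i \in C); rewrite ?orbT ?orbF.
Qed.

Hypothesis h_mono : forall A B, A \subset B -> h A <= h B.
Hypothesis h_submod : forall A B, h (A :|: B) + h (A :&: B) <= h A + h B.

Lemma cond_mono C A B : A \subset B -> cond h C A <= cond h C B.
Proof. by move=> AB; rewrite /cond; have := h_mono (setSU C AB); lra. Qed.

Lemma cond_submod C A B : cond h C (A :|: B) + cond h C (A :&: B) <= cond h C A + cond h C B.
Proof.
rewrite /cond; have := h_submod (A :|: C) (B :|: C).
by rewrite setUACA setUid -setUIl; lra.
Qed.

Lemma cond_eq0_sup S C Y : cond h C S = 0 -> C \subset Y -> cond h Y S = 0.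
Proof.
rewrite /cond => SC CY; have := h_submod (S :|: C) Y.
have -> : S :|: C :|: Y = S :|: Y by rewrite -setUA (setUidPr CY).
have := h_mono (subsetUr S Y).
have C_sub : C \subset (S :|: C) :&: Y by rewrite subsetI subsetUr CY.
have := h_mono C_sub; lra.
Qed.

Lemma cond_IK_eq0 K :
  total_corr (cond h (cmi_C K)) (cmi_Qs K) = 0 -> cond h (cmi_C K) (IK K) = 0.
Proof.
rewrite total_corr_cond_trim IK_repeated; case: ifP => _; last by rewrite cond_set0.
by case/(total_corr_eq0 (cond_set0 _) (@cond_mono _) (@cond_submod _)).
Qed.

Lemma total_corr_cond_split K' I :
  (2 <= size (trim (cmi_C K') (cmi_Qs K')))%N -> cond h (cmi_C K') I = 0 ->
  total_corr (cond h (cmi_C K')) (cmi_Qs K') = 0 <->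
  cond h (cmi_C K') (IK K' :\: I) = 0 /\
  total_corr (cond h (cmi_C K')) (trim I (genP K')) = 0.
Proof.
move=> size_Q gI; set C' := cmi_C K'; set Q := trim C' (cmi_Qs K').
have g0 := cond_set0 C'; have gm := @cond_mono C'; have gs := @cond_submod C'.
have IK_Q : IK K' = repeated Q by rewrite IK_repeated size_Q.
have drop_I A : cond h C' (A :\: I) = cond h C' A by exact: null_setD.
rewrite total_corr_cond_trim -/Q (total_corr_eq0 g0 gm gs) -IK_Q drop_I.
rewrite [total_corr _ (trim (IK K') Q)](total_corr_trim g0 (S := I)) => [|A]; last first.
  by rewrite drop_I.
suff -> : total_corr (cond h C') (trim I (genP K')) =
          total_corr (cond h C') (trim I (trim (IK K') Q)) by [].
rewrite genP_trim -/C' -/Q ifN -?ltnNge //; case: ifP => // /andP [_ small].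
by rewrite !(total_corr_small g0) // (leq_trans (size_trim_le _ _) small).
Qed.

Lemma total_corr_cond_Rcmi K K' :
  total_corr (cond h (cmi_C K)) (cmi_Qs K) = 0 -> cmi_C K \subset cmi_C K' ->
  (2 <= size (trim (cmi_C K') (cmi_Qs K')))%N ->
  total_corr (cond h (cmi_C K')) (cmi_Qs K') = 0 <->
  total_corr (cond h (cmi_C (Rcmi K K'))) (cmi_Qs (Rcmi K K')) = 0.
Proof.
move=> tcK CC' size_Q; set C := cmi_C K; set C' := cmi_C K'; set I := IK K.
have gI : cond h C I = 0 := cond_IK_eq0 tcK.
have absorb_I Y : C \subset Y -> h (I :|: Y) = h Y.
  by move=> CY; have := cond_eq0_sup gI CY; rewrite /cond; lra.
have C_CI : C \subset C' :\: I.
  apply/subsetP => i Ci; rewrite inE (subsetP CC' i Ci) andbT.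
  by apply: contraL Ci => /IK_disjoint.
have cond_CI A : cond h (C' :\: I) A = cond h C' A.
  have h_CI Y : h (Y :|: (C' :\: I)) = h (Y :|: C').
    rewrite -absorb_I; last exact: subset_trans C_CI (subsetUr _ _).
    rewrite -[RHS]absorb_I; last exact: subset_trans CC' (subsetUr _ _).
    by congr h; apply/setP => i; rewrite !inE; case: (i \in I).
  by rewrite /cond h_CI; have := h_CI set0; rewrite !set0U => ->.
have g0 := cond_set0 C'; have gm := @cond_mono C'; have gs := @cond_submod C'.
rewrite (total_corr_cond_split size_Q (cond_eq0_sup gI CC')) /Rcmi -/I -/C'.
rewrite -/(trim I (genP K')); case: ifP => [/eqP -> | _]; case: ifP => T_small /=.
- by rewrite g0 (total_corr_small g0 T_small) (total_corr_small (cond_set0 _)).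
- by rewrite g0 (eq_total_corr _ cond_CI); split=> [[]|].
- by rewrite (eq_total_corr _ cond_CI) (total_corr_dup_eq0 g0 gm gs) !(total_corr_small g0).
- by rewrite (eq_total_corr _ cond_CI) (total_corr_dup_eq0 g0 gm gs).
Qed.

End CMI.

(** * A separating two-point distribution *)

Section TwoPointDistribution.
Variables (n : nat) (C0 : {set 'I_n}).
Implicit Types (A C S : {set 'I_n}) (s : seq {set 'I_n}).

Definition fair_coin (w : nat) : R := if (w <= 1)%N then / 2 else 0.

Definition coin_outside (j : 'I_n) (w : nat) : nat := if j \in C0 then 0%N else w.

Local Notation h := (entropy fair_coin coin_outside).

Lemma fair_coin_out w : (1 < w)%N -> fair_coin w = 0.
Proof. by rewrite /fair_coin ltnNge => /negbTE ->. Qed.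

Lemma fair_coin_pmf : is_pmf fair_coin.
Proof.
split=> [w|]; first by rewrite /fair_coin; case: ifP; lra.
have := is_series_support2 fair_coin_out; rewrite /fair_coin /=.
by have -> : / 2 + / 2 = R1 by field.
Qed.

Lemma ent_term_coin_out S w : (1 < w)%N -> ent_term fair_coin coin_outside S w = 0.
Proof. by move=> w_gt1; rewrite /ent_term fair_coin_out //; lra. Qed.

Lemma marg_coin S w : (w <= 1)%N ->
  marg fair_coin coin_outside S w = if S \subset C0 then 1 else / 2.
Proof.
move=> w_le1; case: ifP => SC0.
  apply: (prob_predT fair_coin_pmf) => k; apply/forall_inP => i /(subsetP SC0) iC0.
  by rewrite /coin_outside iC0.
have [j Sj jC0] : exists2 j, j \in S & j \notin C0 by apply/subsetPn; rewrite SC0.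
have sv_eq k : sameval coin_outside S w k = (w == k).
  apply/idP/eqP => [/forall_inP/(_ j Sj)|<-]; last exact: sameval_refl.
  by rewrite /coin_outside (negbTE jC0) => /eqP.
rewrite /marg Series_support2 => [|k /fair_coin_out ->]; last by case: ifP.
by rewrite !sv_eq /fair_coin /=; case: w {sv_eq} w_le1 => [|[|]] //= _; lra.
Qed.

Lemma entropy_coin S : h S = if S \subset C0 then 0 else ln 2.
Proof.
rewrite /entropy Series_support2 => [|k]; last exact: ent_term_coin_out.
rewrite /ent_term !marg_coin // /fair_coin /=.
by case: ifP => _; rewrite ?ln_1 ?ln_Rinv; lra.
Qed.

Lemma fair_coin_admissible : admissible fair_coin coin_outside.
Proof.
split=> [|i]; first exact: fair_coin_pmf.
by eexists; apply: is_series_support2 => k; exact: ent_term_coin_out.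
Qed.

Lemma total_corr_coin_eq0 C s : ~~ (C \subset C0) -> total_corr (cond h C) s = 0.
Proof.
move=> CC0; have cond0 A : cond h C A = 0.
  by rewrite /cond !entropy_coin subUset (negbTE CC0) andbF; lra.
rewrite /total_corr cond0; suff -> : sum_sets (cond h C) s = 0 by lra.
by elim: s => //= A s ->; rewrite cond0; lra.
Qed.

Lemma total_corr_coin_neq0 s :
  (2 <= count (fun Q : {set 'I_n} => ~~ (Q \subset C0)) s)%N ->
  total_corr (cond h C0) s <> 0.
Proof.
move=> cnt; have cond_eq A : cond h C0 A = if A \subset C0 then 0 else ln 2.
  by rewrite /cond !entropy_coin subUset subxx andbT; case: ifP; lra.
have sum_eq : sum_sets (cond h C0) s =
              INR (count (fun Q : {set 'I_n} => ~~ (Q \subset C0)) s) * ln 2.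
  elim: s {cnt} => [|A s IH] /=; first lra.
  by rewrite cond_eq IH; case: ifP => _; rewrite ?add0n ?add1n ?S_INR /=; lra.
have /negbTE bigcup_C0 : ~~ (\bigcup_(Q <- s) Q \subset C0).
  have : (0 < count (fun Q : {set 'I_n} => ~~ (Q \subset C0)) s)%N by apply: leq_trans cnt.
  elim: s {cnt sum_eq} => [|A s IH] //=; rewrite big_cons subUset negb_and.
  by case: (A \subset C0).
have ln2_gt0 : 0 < ln 2 by rewrite -ln_1; apply: ln_increasing; lra.
have := Rmult_le_compat_r _ _ _ (Rlt_le _ _ ln2_gt0) (le_INR _ _ (leP cnt)).
by rewrite /total_corr sum_eq cond_eq bigcup_C0 /=; lra.
Qed.

End TwoPointDistribution.

Section Implication.
Variable n : nat.
Implicit Types K : cmi n.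

Lemma not_implies K K2 :
  ~~ (cmi_C K \subset cmi_C K2) ->
  (2 <= count (fun Q : {set 'I_n} => ~~ (Q \subset cmi_C K2)) (cmi_Qs K2))%N ->
  ~ cmi_implies K K2.
Proof.
move=> CC2 cnt imp; apply: (total_corr_coin_neq0 cnt); apply/valid_total_corr.
apply: imp; first exact: fair_coin_admissible.
by apply/valid_total_corr; exact: total_corr_coin_eq0.
Qed.

Lemma nondegenerate_trim K :
  ~ degenerate K -> (2 <= size (trim (cmi_C K) (cmi_Qs K)))%N.
Proof.
move=> ndK; rewrite leqNgt; apply/negP => small; apply: ndK => q X _.
apply/valid_total_corr; rewrite total_corr_cond_trim.
exact: (total_corr_small (cond_set0 _ _) small).
Qed.

Lemma Rcmi_nondeg K K' : Rcmi K K' <> cmi_deg n ->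
  cmi_C (Rcmi K K') = cmi_C K' :\: IK K /\
  (2 <= count (fun Q : {set 'I_n} => ~~ (Q \subset cmi_C (Rcmi K K')))
              (cmi_Qs (Rcmi K K')))%N.
Proof.
set I := IK K; set C' := cmi_C K'.
have not_sub P : P != set0 -> (forall i, i \in P -> i \notin C') -> ~~ (P \subset C' :\: I).
  move=> /set0Pn [i Pi] PC'; apply/subsetPn; exists i => //.
  by rewrite inE negb_and (PC' i Pi) orbT.
have genP_C' P i : P \in genP K' -> i \in P -> i \notin C'.
  rewrite genP_trim; case: ifP => // _; case: ifP => // _.
  by case/mem_trim => Q /mem_trim [Q0 _ [-> _]] [-> _]; rewrite !inE => /and3P [].
have T_not_sub P : P \in trim I (genP K') -> ~~ (P \subset C' :\: I).
  case/mem_trim => P0 P0_gen [-> P_ne0]; apply: not_sub P_ne0 _ => i.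
  by rewrite inE => /andP [_]; exact: genP_C'.
have D_not_sub : IK K' :\: I != set0 -> ~~ (IK K' :\: I \subset C' :\: I).
  by move=> D_ne0; apply: not_sub D_ne0 _ => i /setDP [/IK_disjoint].
rewrite /Rcmi -/I -/C' -/(trim I (genP K')).
have count_T : count (fun Q : {set 'I_n} => ~~ (Q \subset C' :\: I)) (trim I (genP K')) =
               size (trim I (genP K')).
  by apply/eqP; rewrite -all_count; apply/allP => P /T_not_sub.
case: ifP => D0; case: ifP => T_small //= _; split => //.
- by rewrite count_T ltnNge T_small.
- by rewrite D_not_sub ?D0.
- by rewrite D_not_sub ?D0 // !add1n !ltnS.
Qed.

End Implication.

Theorem mainTheorem17 (n : nat) (K K' : cmi n) :
  ~ degenerate K -> ~ degenerate K' ->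
  (Rcmi K K' = cmi_deg n ->
     (cmi_implies K K' <-> cmi_C K \subset cmi_C K')) /\
  (Rcmi K K' <> cmi_deg n ->
     (cmi_implies K K' <-> cmi_implies K (Rcmi K K'))).
Proof.
move=> _ ndK'; have size_Q := nondegenerate_trim ndK'.
have cnt : (2 <= count (fun Q : {set 'I_n} => ~~ (Q \subset cmi_C K')) (cmi_Qs K'))%N.
  by rewrite -size_trim.
have reduce q X : admissible q X -> valid q X K -> cmi_C K \subset cmi_C K' ->
                  valid q X K' <-> valid q X (Rcmi K K').
  move=> [q_pmf X_fin] vK CC'; rewrite !valid_total_corr.
  apply: total_corr_cond_Rcmi => //; [exact: entropy_mono | exact: entropy_submod].
split=> [R_deg | R_ndeg].
  split=> [imp | CC' q X adm vK].
    by apply/negP => /negP CC'; exact: not_implies CC' cnt imp.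
  apply/(reduce q X adm vK CC'); rewrite R_deg.
  exact/valid_total_corr/(total_corr_small (cond_set0 _ _)).
have [CC' | nCC'] := boolP (cmi_C K \subset cmi_C K').
  by split=> imp q X adm vK; apply/(reduce q X adm vK CC'); exact: imp.
have [CR cntR] := Rcmi_nondeg R_ndeg.
split=> imp; exfalso; first exact: not_implies nCC' cnt imp.
apply: not_implies _ cntR imp; rewrite CR; apply: contra nCC' => /subset_trans; apply.
exact: subsetDl.
Qed.
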